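(* Let $G$ be a directed acyclic graph on $[n]$ and $H\subseteq G$ a subgraph. Then $Q_H$ is a face of $\tilde Q_G$ if and only if $H$ is path consistent and admissible with respect to $G$.
   Context: Conventions: $G$ is a directed acyclic graph with vertex set $[n]$, every edge $(i,j)\in E(G)$ satisfying $i<j$. A subgraph $H\subseteq G$ means $V(H)=[n]$ and $E(H)\subseteq E(G)$; $H^{un}$ is the underlying undirected graph. $Q_H=\mathrm{conv}\{\mathbf e_i-\mathbf e_j:(i,j)\in E(H)\}$, $\tilde Q_G=\mathrm{conv}(\{\mathbf 0\}\cup\{\mathbf e_i-\mathbf e_j:(i,j)\in E(G)\})$ in $\mathbb R^n$. Path consistency: for an undirected path $p$ in $H^{un}$ from $u$ to $v$, let $\delta(p)$ be the number of edges traversed (from $u$ to $v$) along their orientation minus the number traversed against it. $H$ is path consistent if any two undirected paths in $H^{un}$ with the same endpoints $u,v$ have equal $\delta$; this common value is $\ell_{uv}$. Within a connected component $C$ of $H^{un}$, a weight source is a vertex $u_*\in C$ such that $\ell_{u_*v_*}=\max_{u,v\in C}\ell_{uv}$ for some $v_*\in C$. The weight function $w:[n]\to\mathbb Z$ is $w(i)=\ell_{u_*i}$ where $u_*$ is any weight source in the component of $i$ (independent of the choice). $H_{comp}$: directed multigraph whose vertices are the connected components of $H^{un}$, with one edge from the component of $u$ to the component of $v$ for each $(u,v)\in E(G)\setminus E(H)$. For such an edge $e$ corresponding to $(u,v)$, the weight decrease is $\mathsf{wd}(e)=w(u)-w(v)$. Admissibility: a path consistent $H$ is admissible with respect to $G$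 if for every directed cycle $\mathcal C$ of $H_{comp}$ (including loops, which are cycles of length 1), $\sum_{e\in\mathcal C}\mathsf{wd}(e)>-|\mathcal C|$, where $|\mathcal C|$ is the number of edges of $\mathcal C$. *)

From HB Require Import structures.
From mathcomp Require Import all_boot all_order all_algebra.
Set Implicit Arguments. Unset Strict Implicit. Unset Printing Implicit Defensive.
Import Order.TTheory GRing.Theory Num.Theory.
Local Open Scope ring_scope.

(* Vertices [n] are represented by 'I_n = {0,..,n-1} (order preserved).
   A (di)graph on [n] is its edge set, a {set 'I_n * 'I_n}; an edge (i,j) is i -> j. *)

Section Polytopes.
Variables (R : realFieldType) (n : nat).

Definition conv (S : seq 'rV[R]_n) : 'rV[R]_n -> Prop :=
  fun x => exists lam : 'I_(size S) -> R,
    (forall i, 0 <= lam i) /\ \sum_i lam i = 1 /\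
    x = \sum_i lam i *: S`_i.

Definition dotv (c x : 'rV[R]_n) : R := \sum_k c 0 k * x 0 k.

(* F is a face of the polytope P: F = P ∩ {c.x = b} for a valid inequality c.x <= b
   (the empty face and P itself included). *)
Definition is_face (F P : 'rV[R]_n -> Prop) : Prop :=
  exists (c : 'rV[R]_n) (b : R),
    (forall x, P x -> dotv c x <= b) /\
    (forall x, F x <-> (P x /\ dotv c x = b)).

Definition edge_vec (e : 'I_n * 'I_n) : 'rV[R]_n :=
  delta_mx 0 e.1 - delta_mx 0 e.2.

Definition Q (H : {set 'I_n * 'I_n}) : 'rV[R]_n -> Prop :=
  conv [seq edge_vec e | e <- enum H].

Definition Qt (G : {set 'I_n * 'I_n}) : 'rV[R]_n -> Prop :=
  conv (0 :: [seq edge_vec e | e <- enum G]).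

End Polytopes.

Section Combinatorics.
Variable n : nat.
Implicit Types (H G : {set 'I_n * 'I_n}) (u v a b : 'I_n).

Definition hun H : rel 'I_n := fun a b => ((a, b) \in H) || ((b, a) \in H).

Definition step_val H a b : int :=
  if (a, b) \in H then 1 else if (b, a) \in H then -1 else 0.

Fixpoint delta H u (p : seq 'I_n) : int :=
  match p with
  | [::] => 0
  | a :: p' => step_val H u a + delta H a p'
  end.

Definition upath H u v (p : seq 'I_n) : bool :=
  [&& path (hun H) u p, uniq (u :: p) & last u p == v].

Definition path_consistent H : Prop :=
  forall u v p q, upath H u v p -> upath H u v q -> delta H u p = delta H u q.

Definition is_ell H u v (l : int) : Prop :=
  exists p, upath H u v p /\ delta H u p = l.

Definition weight_source H us : Prop :=
  exists vs l, connect (hun H) us vs /\ is_ell H us vs l /\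
    (forall a b la, connect (hun H) us a -> connect (hun H) us b ->
       is_ell H a b la -> la <= l).

Definition is_weight H (w : 'I_n -> int) : Prop :=
  forall i, exists us, connect (hun H) us i /\ weight_source H us /\ is_ell H us i (w i).

(* A directed cycle of H_comp of length k.+1: its edges f 0, ..., f k are edges
   (u,v) of G not in H; the head component of each edge is the tail component of
   the next (cyclically); the visited components (tails) are pairwise distinct. *)
Definition comp_cycle G H (k : nat) (f : 'I_k.+1 -> 'I_n * 'I_n) : Prop :=
  [/\ forall i, f i \in G :\: H,
      forall i, connect (hun H) (f i).2 (f (ordS i)).1 &
      forall i j, i != j -> ~~ connect (hun H) (f i).1 (f j).1].

Definition admissible G H : Prop :=
  forall w, is_weight H w ->
  forall k (f : 'I_k.+1 -> 'I_n * 'I_n), comp_cycle G H f ->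
    - (k.+1)%:Z < \sum_(i < k.+1) (w (f i).1 - w (f i).2).

End Combinatorics.

From HB Require Import structures.
From mathcomp Require Import all_boot all_order all_algebra zify lra.
Set Implicit Arguments. Unset Strict Implicit. Unset Printing Implicit Defensive.
Import Order.TTheory GRing.Theory Num.Theory.
Local Open Scope ring_scope.

(* Both conditions are equivalent to the existence of a potential c : [n] -> R
   with c u - c v = 1 on the edges (u,v) of H and c u - c v < 1 on the other
   edges of G.  Read as the functional x |-> sum_k c_k x_k, such a c exposes
   Q_H as a face of tilde Q_G; conversely, the functional of the face has a
   positive level (0 lies in tilde Q_G but not in Q_H, as G is acyclic) and
   rescales to such a potential, because e_u - e_v lies in Q_A only if (u,v)
   is in A.
   A potential makes delta along a path equal to the potential drop, so H is
   path consistent, and it makes w + c constant on components, so the sum of wd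
   along a cycle of H_comp telescopes to a sum of terms c v - c u > -1.
   Conversely, path consistency yields an integer potential p on H and from it
   a weight function w; admissibility says that H_comp has no negative simple
   cycle for the arc lengths 1 + wd(e) - 1/(n+1), and c = - d - w works, where
   d is the length of a shortest simple walk ending in the component. *)

Lemma sum_subpred (V : nmodType) (I : finType) (D E : {pred I}) (F : I -> V) :
  {subset E <= D} -> (forall i, i \in D -> i \notin E -> F i = 0) ->
  \sum_(i in D) F i = \sum_(i in E) F i.
Proof.
move=> sED F0; rewrite (bigID (mem E)) /= [X in _ + X]big1 ?addr0.
  by apply: eq_bigl => i; rewrite andb_idl // => /sED.
by move=> i /andP[]; apply: F0.
Qed.

Lemma sum_ordS_sub (V : zmodType) k (F : 'I_k.+1 -> V) :
  \sum_(i < k.+1) (F i - F (ordS i)) = 0.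
Proof. by rewrite sumrB (reindex_inj (@ordS_inj k.+1)) subrr. Qed.

Lemma cycle_nth (T : Type) (r : rel T) x0 s i : cycle r s -> (i < size s)%N ->
  r (nth x0 s i) (nth x0 s (i.+1 %% size s)).
Proof.
case: s => [|x p] //= /(pathP x0) p_link i_lt; have := p_link i.
rewrite size_rcons -rcons_cons nth_rcons i_lt nth_rcons => /(_ isT).
rewrite ltnS in i_lt; case: ltngtP => [lt_ip | gt_ip | ->]; last by rewrite modnn.
  by rewrite modn_small.
by rewrite leqNgt gt_ip in i_lt.
Qed.

Fixpoint seqs_upto (T : finType) (N : nat) : seq (seq T) :=
  if N is N'.+1 then [::] :: [seq x :: s | x <- enum T, s <- seqs_upto T N']
  else [:: [::]].

Lemma mem_seqs_upto (T : finType) (s : seq T) N :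
  (size s <= N)%N -> s \in seqs_upto T N.
Proof.
elim: N s => [|N IHN] [|x s] //=; rewrite ?inE ?eqxx // ltnS => s_le.
by apply/orP; right; apply: allpairs_f; rewrite ?mem_enum ?IHN.
Qed.

Lemma size_le_card_uniq_map (I T : finType) (f : I -> T) s :
  uniq (map f s) -> (size s <= #|T|)%N.
Proof. by move=> /card_uniqP; rewrite size_map => <-; apply: max_card. Qed.

Section ConvexHulls.
Variables (R : realFieldType) (n : nat).
Implicit Types (c x : 'rV[R]_n) (b : R).

Lemma conv_mapP (T : finType) (s : seq T) (f : T -> 'rV[R]_n) x : uniq s ->
  conv [seq f i | i <- s] x <-> exists2 mu : T -> R, (forall i, 0 <= mu i) &
    \sum_(i <- s) mu i = 1 /\ x = \sum_(i <- s) mu i *: f i.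
Proof.
case: s => [|i0 s'] s_uniq.
  split; [case=> lam [_ []] | case=> mu _ []];
    by rewrite ?big_ord0 ?big_nil => /esym/eqP; rewrite oner_eq0.
set s := i0 :: s'; set N := size [seq f i | i <- s].
have nth_s (j : 'I_N) : nth i0 s j \in s by rewrite mem_nth // -(size_map f) ltn_ord.
split=> [[lam [lam_ge0 [lam1 ->]]] | [mu mu_ge0 [mu1 ->]]].
  exists (fun i => \sum_(j < N | nth i0 s j == i) lam j).
    by move=> i; apply: sumr_ge0.
  rewrite !(big_uniq _ s_uniq); split.
    rewrite -lam1 (partition_big (fun j : 'I_N => nth i0 s j) (mem s)) //.
    by move=> j _; apply: nth_s.
  rewrite (partition_big (fun j : 'I_N => nth i0 s j) (mem s)) => [|j _]; last exact: nth_s.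
  apply: eq_bigr => i _; rewrite scaler_suml; apply: eq_bigr => j /eqP <-.
  by rewrite (nth_map i0) // -(size_map f).
exists (fun j : 'I_N => mu (nth i0 s j)); split=> //.
split; first by rewrite -mu1 [RHS](big_nth i0) big_mkord /N size_map.
rewrite [LHS](big_nth i0) big_mkord /N size_map.
by apply: eq_bigr => j _; rewrite (nth_map i0).
Qed.

Definition hull (I : finType) (D : {pred I}) (v : I -> 'rV[R]_n) x :=
  exists2 mu : I -> R, (forall i, 0 <= mu i) &
    \sum_(i in D) mu i = 1 /\ x = \sum_(i in D) mu i *: v i.

(* The convex hull of the origin together with the points [v i], [i \in D]. *)
Definition hull0 (I : finType) (D : {pred I}) (v : I -> 'rV[R]_n) x :=
  exists2 mu : I -> R, (forall i, 0 <= mu i) &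
    \sum_(i in D) mu i <= 1 /\ x = \sum_(i in D) mu i *: v i.

Lemma dotv_sum c (I : finType) (P : pred I) (mu : I -> R) (v : I -> 'rV[R]_n) :
  dotv c (\sum_(i | P i) mu i *: v i) = \sum_(i | P i) mu i * dotv c (v i).
Proof.
rewrite /dotv; under eq_bigr => k _ do rewrite summxE big_distrr.
rewrite exchange_big; apply: eq_bigr => i _; rewrite big_distrr.
by apply: eq_bigr => k _; rewrite !mxE; exact: mulrCA.
Qed.

Lemma dotv0 c : dotv c 0 = 0.
Proof. by rewrite /dotv big1 // => k _; rewrite mxE mulr0. Qed.

Lemma edge_vecE (e : 'I_n * 'I_n) k :
  edge_vec R e 0 k = (k == e.1)%:R - (k == e.2)%:R.
Proof. by rewrite !mxE. Qed.

Lemma dotv_edge_vec c (e : 'I_n * 'I_n) : dotv c (edge_vec R e) = c 0 e.1 - c 0 e.2.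
Proof.
have dot_delta i : \sum_k c 0 k * (k == i)%:R = c 0 i.
  by rewrite (bigD1 i) //= eqxx mulr1 big1 ?addr0 // => k /negbTE ->; rewrite mulr0.
rewrite /dotv; under eq_bigr => k _ do rewrite edge_vecE mulrBr.
by rewrite sumrB !dot_delta.
Qed.

Section Hull.
Variables (I : finType) (v : I -> 'rV[R]_n).
Implicit Types (D E : {pred I}).

Lemma hull_dotv_lt D c b x :
  (forall i, i \in D -> dotv c (v i) < b) -> hull D v x -> dotv c x < b.
Proof.
move=> lt_b [mu mu_ge0 [mu1 ->]].
have gap_ge0 i : i \in D -> 0 <= mu i * (b - dotv c (v i)).
  by move=> iD; rewrite mulr_ge0 // subr_ge0 ltW ?lt_b.
have [i /andP[iD mu_gt0]] : exists i, (i \in D) && (0 < mu i).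
  by apply: psumr_neq0P => //; rewrite mu1; apply/eqP; rewrite oner_neq0.
have gap_gt0 : 0 < \sum_(i in D) mu i * (b - dotv c (v i)).
  rewrite lt_def sumr_ge0 // andbT psumr_neq0 //; apply/hasP; exists i.
    exact: mem_index_enum.
  by rewrite iD mulr_gt0 // subr_gt0 lt_b.
rewrite dotv_sum -subr_gt0; congr (0 < _): gap_gt0.
by under eq_bigr do rewrite mulrBr; rewrite sumrB -mulr_suml mu1 mul1r.
Qed.

Lemma hull_mem D i : i \in D -> hull D v (v i).
Proof.
move=> iD; exists (fun j => (j == i)%:R) => [j|]; first exact: ler0n.
split; rewrite (bigD1 i iD) /= eqxx ?scale1r big1 ?addr0 //.
all: by move=> j /andP[_ /negbTE ->]; rewrite ?scale0r.
Qed.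

Lemma hull0_0 D : hull0 D v 0.
Proof. by exists (fun=> 0) => //; rewrite !big1 // => i _; rewrite scale0r. Qed.

Lemma hull_hull0 D E x : {subset E <= D} -> hull E v x -> hull0 D v x.
Proof.
move=> sED [mu mu_ge0 [mu1 ->]].
pose mu' i := if i \in E then mu i else 0.
have mu'0 i : i \in D -> i \notin E -> mu' i = 0 by rewrite /mu' => _ /negbTE ->.
have mu'E i : i \in E -> mu' i = mu i by rewrite /mu' => ->.
exists mu' => [i|]; first by rewrite /mu'; case: ifP.
rewrite (sum_subpred sED mu'0) (eq_bigr _ mu'E) mu1 (sum_subpred sED).
  by split=> //; apply: eq_bigr => i /mu'E ->.
by move=> i iD /(mu'0 _ iD) ->; rewrite scale0r.
Qed.

Lemma hull_dotv_eq D c b x :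
  (forall i, i \in D -> dotv c (v i) = b) -> hull D v x -> dotv c x = b.
Proof.
move=> dot_b [mu _ [mu1 ->]].
by rewrite dotv_sum -[RHS]mul1r -mu1 mulr_suml; apply: eq_bigr => i /dot_b ->.
Qed.

Lemma hull0_dotv_le D c b x : 0 <= b ->
  (forall i, i \in D -> dotv c (v i) <= b) -> hull0 D v x -> dotv c x <= b.
Proof.
move=> b_ge0 dot_le [mu mu_ge0 [mu_le1 ->]].
rewrite dotv_sum (@le_trans _ _ (\sum_(i in D) mu i * b)) //.
  by apply: ler_sum => i iD; rewrite ler_wpM2l ?dot_le.
by rewrite -mulr_suml ler_piMl.
Qed.

Lemma hull0_face D E c x : {subset E <= D} ->
  (forall i, i \in E -> dotv c (v i) = 1) ->
  (forall i, i \in D -> i \notin E -> dotv c (v i) < 1) ->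
  hull0 D v x -> dotv c x = 1 -> hull E v x.
Proof.
move=> sED dot1 dot_lt1 [mu mu_ge0 [mu_le1 ->]] dotx.
have gap_ge0 i : i \in D -> 0 <= mu i * (1 - dotv c (v i)).
  move=> iD; rewrite mulr_ge0 // subr_ge0.
  by case: (boolP (i \in E)) => [/dot1 -> | /(dot_lt1 _ iD) /ltW].
have gapE : \sum_(i in D) mu i * (1 - dotv c (v i)) = \sum_(i in D) mu i - 1.
  rewrite -[X in _ - X]dotx dotv_sum -sumrB.
  by apply: eq_bigr => i _; rewrite mulrBr mulr1.
have mu1 : \sum_(i in D) mu i = 1.
  by apply/le_anti; rewrite mu_le1 -subr_ge0 -gapE sumr_ge0.
have gap0 : \sum_(i in D) mu i * (1 - dotv c (v i)) = 0 by rewrite gapE mu1 subrr.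
have mu0 i : i \in D -> i \notin E -> mu i = 0.
  move=> iD iE; have /eqP := psumr_eq0P gap_ge0 gap0 iD.
  by rewrite mulf_eq0 subr_eq0 (gt_eqF (dot_lt1 _ iD iE)) orbF => /eqP.
exists mu => //; rewrite -(sum_subpred sED mu0) -(sum_subpred sED) //.
by move=> i iD iE; rewrite mu0 ?scale0r.
Qed.

End Hull.
End ConvexHulls.

Section ShortestWalks.
Variables (T I : finType) (tl hd : I -> T) (A : pred I).
Variables (R : realDomainType) (a : I -> R).

Definition arc_link : rel I := fun e f => hd e == tl f.

Hypothesis simple_cycle_ge0 : forall s, all A s -> cycle arc_link s ->
  uniq (map tl s) -> 0 <= \sum_(e <- s) a e.

(* [last v (map hd s) == v] says that [s] ends at [v]; the empty walk ends
   everywhere. *)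
Definition simple_walk v s :=
  [&& all A s, sorted arc_link s, last v (map hd s) == v & uniq (map tl s)].

Definition dist v :=
  \big[Order.min/0]_(s <- seqs_upto I #|T| | simple_walk v s) \sum_(e <- s) a e.

Lemma sorted_arc_link_rcons s e :
  sorted arc_link (rcons s e) = sorted arc_link s && (last (tl e) (map hd s) == tl e).
Proof. by case: s => [|f s] /=; rewrite ?eqxx // rcons_path last_map. Qed.

Lemma dist_le v s : simple_walk v s -> dist v <= \sum_(e <- s) a e.
Proof.
move=> walk_s; apply: ge_bigmin_seq => //; apply: mem_seqs_upto.
by case/and4P: walk_s => _ _ _; apply: size_le_card_uniq_map.
Qed.

Lemma simple_walk_rcons s e : A e -> simple_walk (tl e) s ->
  exists2 s', simple_walk (hd e) s' & \sum_(f <- s') a f <= \sum_(f <- s) a f + a e.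
Proof.
move=> eA /and4P[sA s_sorted s_last s_uniq].
have walk_rcons s1 : all A s1 -> sorted arc_link s1 ->
    last (tl e) (map hd s1) == tl e -> tl e \notin map tl s1 -> uniq (map tl s1) ->
    simple_walk (hd e) (rcons s1 e).
  move=> s1A s1_sorted s1_last tl_notin s1_uniq.
  rewrite /simple_walk all_rcons eA s1A sorted_arc_link_rcons s1_sorted s1_last.
  by rewrite !map_rcons last_rcons eqxx rcons_uniq tl_notin s1_uniq.
case: (boolP (tl e \in map tl s)) => [/mapP[y y_s tl_y] | tl_notin]; last first.
  by exists (rcons s e); [apply: walk_rcons | rewrite -cats1 big_cat big_seq1].
case/splitPr: y_s sA s_sorted s_last s_uniq => s1 s2.
rewrite all_cat sorted_cat_cons !map_cat cat_uniq last_cat /= last_map.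
move=> /andP[s1A ys2A] /andP[s1y_sorted ys2_path] last_s2.
move=> /and3P[s1_uniq disj ys2_uniq].
rewrite sorted_arc_link_rcons -tl_y in s1y_sorted.
case/andP: s1y_sorted => s1_sorted s1_last.
exists (rcons s1 e).
  by apply: walk_rcons => //; apply: contra disj; rewrite -tl_y => ->.
have cycle_ge0 : 0 <= \sum_(f <- y :: s2) a f.
  apply: simple_cycle_ge0 => //=; rewrite rcons_path ys2_path /arc_link.
  by rewrite -tl_y.
by rewrite -cats1 !big_cat big_seq1 /= lerD2r lerDl.
Qed.

Lemma dist_arc e : A e -> dist (hd e) <= dist (tl e) + a e.
Proof.
move=> eA; rewrite -lerBlDr; apply: le_bigmin => [|s walk_s].
  have walk_nil : simple_walk (tl e) [::] by rewrite /simple_walk /= eqxx.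
  have [s' walk_s' le_s'] := simple_walk_rcons eA walk_nil.
  rewrite big_nil add0r in le_s'.
  by rewrite lerBlDr add0r (le_trans (dist_le walk_s')).
have [s' walk_s' le_s'] := simple_walk_rcons eA walk_s.
by rewrite lerBlDr (le_trans (dist_le walk_s')).
Qed.

End ShortestWalks.

Definition unit_potential (R : numDomainType) n (H : {set 'I_n * 'I_n})
    (c : 'I_n -> R) :=
  forall e, e \in H -> c e.1 - c e.2 = 1.

Definition face_potential (R : numDomainType) n (G H : {set 'I_n * 'I_n})
    (c : 'I_n -> R) :=
  unit_potential H c /\ forall e, e \in G :\: H -> c e.1 - c e.2 < 1.

Section EdgePolytopes.
Variables (R : realFieldType) (n : nat).
Implicit Types (A G H : {set 'I_n * 'I_n}) (x : 'rV[R]_n).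

Lemma Q_hullP H x : Q H x <-> hull H (@edge_vec R n) x.
Proof.
apply: iff_trans (conv_mapP _ _ (enum_uniq _)) _.
by split=> -[mu mu_ge0 [mu1 xE]]; exists mu; rewrite ?big_enum in mu1 xE *.
Qed.

Lemma Qt_hull0P G x : Qt G x <-> hull0 G (@edge_vec R n) x.
Proof.
pose v (o : option ('I_n * 'I_n)) := if o is Some e then edge_vec R e else 0.
have -> : Qt G x = conv [seq v o | o <- None :: map Some (enum G)] x.
  by rewrite /Qt /= -map_comp.
have uniq_opt : uniq (None :: map Some (enum G)).
  rewrite /= map_inj_uniq ?enum_uniq ?andbT; last exact: Some_inj.
  by apply/mapP => -[].
apply: iff_trans (conv_mapP _ _ uniq_opt) _.
split=> [[mu mu_ge0 []] | [mu mu_ge0 [mu_le1 ->]]].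
  rewrite !big_cons !big_map !big_enum /= scaler0 add0r => mu1 ->.
  by exists (mu \o Some) => [i|]; rewrite ?mu_ge0 // -mu1 lerDr; split.
exists (fun o => if o is Some e then mu e else 1 - \sum_(e in G) mu e).
  by case=> //; rewrite subr_ge0.
by rewrite !big_cons !big_map !big_enum /= scaler0 add0r subrK.
Qed.

Lemma Q_neq0 H : (forall e, e \in H -> (e.1 < e.2)%N) -> ~ Q H (0 : 'rV[R]_n).
Proof.
move=> H_fwd /Q_hullP Q0.
suff : dotv (\row_k (k : nat)%:R) (0 : 'rV[R]_n) < 0 by rewrite dotv0 ltxx.
apply: hull_dotv_lt Q0 => e eH.
by rewrite dotv_edge_vec !mxE subr_lt0 ltr_nat H_fwd.
Qed.

(* [e_u - e_v] is the only edge vector on which [x |-> <e_u - e_v, x>] reaches 2. *)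
Lemma Q_edge_vec_mem A e : e.1 != e.2 -> Q A (edge_vec R e) -> e \in A.
Proof.
move=> e12 /Q_hullP Qe; apply/contraT => eA.
suff : dotv (edge_vec R e) (edge_vec R e) < 2.
  rewrite dotv_edge_vec !edge_vecE !eqxx (eq_sym e.2) (negbTE e12).
  by rewrite subr0 sub0r opprK ltxx.
apply: hull_dotv_lt Qe => e' e'A.
have : ((e'.1 == e.1) && (e'.2 == e.2)) = false.
  by rewrite -xpair_eqE -!surjective_pairing; apply: contraNF eA => /eqP <-.
rewrite dotv_edge_vec !edge_vecE.
by case: (e'.1 == e.1) (e'.1 == e.2) (e'.2 == e.1) (e'.2 == e.2) => [] [] [] [] //= _; lra.
Qed.

Lemma face_potential_of_face G H : (forall e, e \in G -> (e.1 < e.2)%N) ->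
  H \subset G -> is_face (@Q R n H) (@Qt R n G) ->
  exists c : 'I_n -> R, face_potential G H c.
Proof.
move=> G_fwd sHG [c [b [valid faceE]]].
have H_fwd e : e \in H -> (e.1 < e.2)%N by move/(subsetP sHG); apply: G_fwd.
have Qt0 : Qt G (0 : 'rV[R]_n) by apply/Qt_hull0P/hull0_0.
have Qt_edge e : e \in G -> Qt G (edge_vec R e).
  by move=> eG; apply/Qt_hull0P/(hull_hull0 (fun _ => id))/hull_mem.
have b_gt0 : 0 < b.
  rewrite lt_def -{2}(dotv0 c) valid // andbT; apply/eqP => b0.
  by apply: (Q_neq0 H_fwd); apply/faceE; rewrite dotv0 b0.
exists (fun k => c 0 k / b).
split=> [e eH | e /setDP[eG eH]]; rewrite -mulrBl -dotv_edge_vec.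
  have /faceE[_ ->] : Q H (edge_vec R e) by apply/Q_hullP/hull_mem.
  by rewrite divff ?gt_eqF.
rewrite ltr_pdivrMr // mul1r lt_neqAle (valid _ (Qt_edge _ eG)) andbT.
apply: contraNneq eH => dot_b; apply: Q_edge_vec_mem.
  exact/negbT/ltn_eqF/G_fwd.
exact/faceE/(conj (Qt_edge _ eG) dot_b).
Qed.

Lemma face_of_face_potential G H (c : 'I_n -> R) : H \subset G ->
  face_potential G H c -> is_face (@Q R n H) (@Qt R n G).
Proof.
move=> sHG [c_unit c_lt1]; pose cv := \row_k c k.
have dot_cv e : dotv cv (edge_vec R e) = c e.1 - c e.2 by rewrite dotv_edge_vec !mxE.
have dot_lt1 e : e \in G -> e \notin H -> dotv cv (edge_vec R e) < 1.
  by move=> eG eH; rewrite dot_cv c_lt1 // inE eH.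
have dot_le1 e : e \in G -> dotv cv (edge_vec R e) <= 1.
  move=> eG; case: (boolP (e \in H)) => eH; last by rewrite ltW ?dot_lt1.
  by rewrite dot_cv c_unit.
exists cv, 1; split=> [x /Qt_hull0P | x]; first exact: hull0_dotv_le.
split=> [/Q_hullP Qx | [/Qt_hull0P Qtx dotx]].
  split; first exact/Qt_hull0P/(hull_hull0 (subsetP sHG)).
  by apply: hull_dotv_eq Qx => e eH; rewrite dot_cv c_unit.
apply/Q_hullP; apply: (hull0_face (subsetP sHG) _ dot_lt1 Qtx dotx) => e eH.
by rewrite dot_cv c_unit.
Qed.

End EdgePolytopes.

Section UndirectedPaths.
Variables (n : nat) (H : {set 'I_n * 'I_n}).

Lemma hun_sym : symmetric (hun H).
Proof. by move=> a b; rewrite /hun orbC. Qed.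

Lemma connect_hun_sym : connect_sym (hun H).
Proof. exact: sym_connect_sym hun_sym. Qed.

Lemma connect_upath a b : connect (hun H) a b -> exists p, upath H a b p.
Proof.
move/connectP => [p p_path ->]; case: (shortenP p_path) => p' p'_path p'_uniq _.
by exists p'; rewrite /upath p'_path p'_uniq eqxx.
Qed.

Lemma upath_split u v p1 p2 : upath H u v (p1 ++ p2) ->
  upath H u (last u p1) p1 /\ upath H (last u p1) v p2.
Proof.
rewrite /upath cat_path last_cat -cat_cons cat_uniq.
move=> /and3P[/andP[path1 path2] /and3P[uniq1 disj uniq2] last_v].
rewrite /upath path1 path2 uniq1 last_v /= uniq2 eqxx !andbT; split=> //.
by apply: contra disj => last_p2; apply/hasP; exists (last u p1) => //; apply: mem_last.
Qed.

Lemma delta_cat u p q : delta H u (p ++ q) = delta H u p + delta H (last u p) q.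
Proof. by elim: p u => [|a p IHp] u /=; rewrite ?add0r // IHp addrA. Qed.

Lemma delta_rcons u p x :
  delta H u (rcons p x) = delta H u p + step_val H (last u p) x.
Proof. by rewrite -cats1 delta_cat /= addr0. Qed.

End UndirectedPaths.

Section UnitPotential.
Variables (n : nat) (H : {set 'I_n * 'I_n}) (R : realDomainType) (c : 'I_n -> R).
Hypothesis c_unit : unit_potential H c.

Lemma step_val_unit_potential a b : hun H a b -> (step_val H a b)%:~R = c a - c b.
Proof.
rewrite /step_val /hun; case: ifP => [ab _ | _ /= ba]; first by rewrite (c_unit ab).
by rewrite ba -opprB (c_unit ba).
Qed.

Lemma delta_unit_potential u p :
  path (hun H) u p -> (delta H u p)%:~R = c u - c (last u p).
Proof.
elim: p u => [|a p IHp] u /=; first by rewrite subrr.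
by move=> /andP[ua ap]; rewrite intrD step_val_unit_potential // IHp // addrA subrK.
Qed.

Lemma ell_unit_potential u v l : is_ell H u v l -> l%:~R = c u - c v.
Proof. by move=> [p [/and3P[p_path _ /eqP <-] <-]]; apply: delta_unit_potential. Qed.

Lemma unit_potential_path_consistent : path_consistent H.
Proof.
move=> u v p q up uq; apply: (@intr_inj R).
by rewrite !(@ell_unit_potential u v) //; [exists q | exists p].
Qed.

Lemma weight_source_max us a :
  weight_source H us -> connect (hun H) us a -> c a <= c us.
Proof.
move=> [vs [l [us_vs [ell_l l_max]]]] us_a.
have [p a_vs_p] : exists p, upath H a vs p.
  by apply: connect_upath; rewrite (connect_trans _ us_vs) // connect_hun_sym.
have := l_max a vs _ us_a us_vs (ex_intro _ p (conj a_vs_p erefl)).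
rewrite -(ler_int R) (ell_unit_potential ell_l) (@ell_unit_potential a vs).
  by rewrite lerD2r.
by exists p.
Qed.

Lemma weight_add_unit_potential w i j : is_weight H w ->
  connect (hun H) i j -> (w i)%:~R + c i = (w j)%:~R + c j.
Proof.
move=> w_weight ij.
have source k : exists us, [/\ connect (hun H) k us, (w k)%:~R + c k = c us &
    forall a, connect (hun H) k a -> c a <= c us].
  have [us [us_k [us_src ell_k]]] := w_weight k; exists us; split.
  - by rewrite connect_hun_sym.
  - by rewrite (ell_unit_potential ell_k) subrK.
  - move=> a ka; apply: weight_source_max us_src _; exact: connect_trans us_k ka.
have [ui [i_ui -> max_i]] := source i; have [uj [j_uj -> max_j]] := source j.
apply/le_anti/andP; split; [apply: max_j | apply: max_i].
  by rewrite (connect_trans _ i_ui) // connect_hun_sym.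
exact: connect_trans ij j_uj.
Qed.

End UnitPotential.

Lemma face_potential_admissible (R : realDomainType) n (G H : {set 'I_n * 'I_n})
    (c : 'I_n -> R) :
  face_potential G H c -> admissible G H.
Proof.
move=> [c_unit c_lt1] w w_weight k f [f_arcs f_link _].
(* [w + c] is constant on components, so the cycle sum telescopes. *)
pose K x := (w x)%:~R + c x.
have wdE i : ((w (f i).1 - w (f i).2)%:~R : R) =
    (K (f i).1 - K (f (ordS i)).1) + (c (f i).2 - c (f i).1).
  rewrite /K -(weight_add_unit_potential c_unit w_weight (f_link i)) intrB; lra.
rewrite -(ltr_int R) rmorph_sum (eq_bigr _ (fun i _ => wdE i)) /= big_split /=.
have -> : ((- (k.+1)%:Z)%:~R : R) = \sum_(i < k.+1) (-1 : R).
  by rewrite sumr_const card_ord rmorphN /= -mulNrn.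
rewrite sum_ordS_sub add0r; apply: ltr_sum => [|i _].
  by apply/hasP; exists ord0; rewrite ?mem_index_enum.
by have := c_lt1 _ (f_arcs i); lra.
Qed.

Section PathConsistentPotential.
Variables (n : nat) (H : {set 'I_n * 'I_n}).
Hypothesis H_fwd : forall e, e \in H -> (e.1 < e.2)%N.
Hypothesis H_consistent : path_consistent H.

Lemma step_val_rev a b : (a, b) \in H -> step_val H b a = -1.
Proof.
move=> ab; rewrite /step_val ab; case: ifP => // ba.
by have := ltn_trans (H_fwd ab) (H_fwd ba); rewrite ltnn.
Qed.

Lemma upath_edge_rev a b : (a, b) \in H -> upath H b a [:: a].
Proof.
move=> ab; have ba : b != a by apply: contraTneq (H_fwd ab) => /= ->; rewrite ltnn.
by rewrite /upath /= /hun ab orbT inE ba eqxx.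
Qed.

Lemma delta_upath_edge r a b pa pb : (a, b) \in H ->
  upath H r a pa -> upath H r b pb -> delta H r pb = delta H r pa + 1.
Proof.
move=> ab r_pa r_pb.
case/and3P: (r_pa) => pa_path pa_uniq /eqP pa_last.
case: (boolP (b \in r :: pa)) => [b_pa | b_notin].
  case/splitPl: b_pa pa_path pa_uniq pa_last r_pa => p1 p2 b_last _ _ _ r_pa.
  have [r_p1 b_p2] := upath_split r_pa; rewrite b_last in r_p1 b_p2.
  have p2_delta : delta H b p2 = -1.
    by rewrite (H_consistent b_p2 (upath_edge_rev ab)) /= step_val_rev // addr0.
  by rewrite (H_consistent r_pb r_p1) delta_cat b_last p2_delta addrK.
have r_pab : upath H r b (rcons pa b).
  rewrite /upath rcons_path pa_path pa_last /hun ab last_rcons eqxx /= !andbT.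
  by rewrite -[_ && _]/(uniq (rcons (r :: pa) b)) rcons_uniq b_notin.
by rewrite (H_consistent r_pb r_pab) delta_rcons pa_last /step_val ab.
Qed.

Lemma path_consistent_unit_potential : exists p : 'I_n -> int, unit_potential H p.
Proof.
pose r := fingraph.root (hun H).
have r_path i : exists p, upath H (r i) i p.
  by apply: connect_upath; rewrite connect_hun_sym connect_root.
exists (fun i => - delta H (r i) (xchoose (r_path i))) => -[a b] ab /=.
have r_ab : r a = r b.
  by apply/(fingraph.rootP (connect_hun_sym H)); apply: connect1; rewrite /hun ab.
set pb := xchoose (r_path b).
have r_pb : upath H (r a) b pb by rewrite r_ab; apply: xchooseP.
by rewrite -r_ab (delta_upath_edge ab (xchooseP (r_path a)) r_pb); lia.
Qed.

End PathConsistentPotential.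

Lemma unit_potential_weight n (H : {set 'I_n * 'I_n}) (p : 'I_n -> int) :
  unit_potential H p -> exists w, is_weight H w.
Proof.
move=> p_unit.
have ellE u v : connect (hun H) u v -> is_ell H u v (p u - p v).
  move=> /connect_upath[q uq]; exists q; split=> //.
  by rewrite -[LHS]intz (@ell_unit_potential _ _ _ _ p_unit u v) //; exists q.
(* A maximiser of [p] on a component is a weight source. *)
pose top i := [arg max_(j > i | connect (hun H) i j) p j]%O.
pose bot i := [arg min_(j < i | connect (hun H) i j) p j]%O.
exists (fun i => p (top i) - p i) => i.
have [i_top top_max] : connect (hun H) i (top i) /\
    forall j, connect (hun H) i j -> p j <= p (top i).
  by rewrite /top; case: arg_maxP.
have [i_bot bot_min] : connect (hun H) i (bot i) /\
    forall j, connect (hun H) i j -> p (bot i) <= p j.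
  by rewrite /bot; case: arg_minP.
have top_i : connect (hun H) (top i) i by rewrite connect_hun_sym.
exists (top i); split=> //; split; last exact: ellE.
exists (bot i), (p (top i) - p (bot i)); split; first exact: connect_trans top_i i_bot.
split=> [|a b l top_a top_b /(ell_unit_potential p_unit)].
  exact/ellE/connect_trans/i_bot.
rewrite intz => ->; apply: lerB; [apply: top_max | apply: bot_min].
  exact: connect_trans i_top top_a.
exact: connect_trans i_top top_b.
Qed.

Section AdmissibleCycles.
Variables (R : realFieldType) (n : nat) (G H : {set 'I_n * 'I_n}) (w : 'I_n -> int).
Hypothesis w_adm : forall k (f : 'I_k.+1 -> 'I_n * 'I_n), comp_cycle G H f ->
  - (k.+1)%:Z < \sum_(i < k.+1) (w (f i).1 - w (f i).2).

(* The vertices of H_comp are represented by the roots of the components. *)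
Definition comp_tail (e : 'I_n * 'I_n) := fingraph.root (hun H) e.1.
Definition comp_head (e : 'I_n * 'I_n) := fingraph.root (hun H) e.2.

(* A simple cycle has at most [n] arcs, so the slack [1/(n+1)] preserves the
   strict inequality of admissibility. *)
Definition arc_weight (e : 'I_n * 'I_n) : R :=
  1 - (n.+1)%:R^-1 + (w e.1 - w e.2)%:~R.

Lemma comp_cycle_nth e0 s : all [in G :\: H] (e0 :: s) ->
  cycle (arc_link comp_tail comp_head) (e0 :: s) -> uniq (map comp_tail (e0 :: s)) ->
  comp_cycle G H (fun i : 'I_(size s).+1 => nth e0 (e0 :: s) i).
Proof.
move=> /allP s_arcs s_cycle s_uniq; split=> [i | i | i j ij].
- by apply: s_arcs; apply: mem_nth.
- apply/(fingraph.rootP (connect_hun_sym H)); apply/eqP.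
  exact: (cycle_nth e0 s_cycle (ltn_ord i)).
- have tails_ne : comp_tail (nth e0 (e0 :: s) i) != comp_tail (nth e0 (e0 :: s) j).
    by rewrite -!(nth_map e0 (comp_tail e0)) ?nth_uniq ?size_map.
  by apply: contra tails_ne => /(fingraph.rootP (connect_hun_sym H)) /eqP.
Qed.

Lemma arc_weight_cycle_ge0 s : all [in G :\: H] s ->
  cycle (arc_link comp_tail comp_head) s -> uniq (map comp_tail s) ->
  0 <= \sum_(e <- s) arc_weight e.
Proof.
case: s => [|e0 s] s_arcs s_cycle s_uniq; first by rewrite big_nil.
have := w_adm (comp_cycle_nth s_arcs s_cycle s_uniq).
set k := size s; set S := \sum_(i < k.+1) _ => S_gt.
have S_ge : - k%:R <= S%:~R :> R.
  have : - k%:Z <= S by lia.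
  by rewrite -(ler_int R) rmorphN.
rewrite (big_nth e0) big_mkord big_split sumr_const card_ord -rmorph_sum /= -/S -/k.
set slack : R := (n.+1)%:R^-1.
have slack_lt : (k.+1)%:R * slack < 1.
  have k_lt : (k.+1 <= n)%N.
    by rewrite -[n]card_ord; apply: size_le_card_uniq_map s_uniq.
  by rewrite ltr_pdivrMr ?ltr0n // mul1r ltr_nat ltnS.
rewrite -mulr_natl mulrBr mulr1 -natr1; rewrite -natr1 in slack_lt; lra.
Qed.

Lemma arc_weight_lt e : arc_weight e < 1 + (w e.1)%:~R - (w e.2)%:~R.
Proof.
have : 0 < (n.+1)%:R^-1 :> R by rewrite invr_gt0 ltr0n.
rewrite /arc_weight intrB; move: (n.+1)%:R^-1 => slack; lra.
Qed.

End AdmissibleCycles.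

Lemma admissible_face_potential (R : realFieldType) n (G H : {set 'I_n * 'I_n}) :
  (forall e, e \in H -> (e.1 < e.2)%N) -> path_consistent H -> admissible G H ->
  exists c : 'I_n -> R, face_potential G H c.
Proof.
move=> H_fwd H_consistent H_adm.
have [p p_unit] := path_consistent_unit_potential H_fwd H_consistent.
have [w w_weight] := unit_potential_weight p_unit.
have pR_unit : unit_potential H (fun x => (p x)%:~R : R).
  by move=> e /p_unit; rewrite -intrB => ->.
pose d := dist (comp_tail H) (comp_head H) [in G :\: H] (arc_weight R w).
have d_arc e : e \in G :\: H ->
    d (comp_head H e) <= d (comp_tail H e) + arc_weight R w e.
  exact/dist_arc/arc_weight_cycle_ge0/H_adm.
exists (fun x => - d (fingraph.root (hun H) x) - (w x)%:~R); split=> e eH.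
  have e_conn : connect (hun H) e.1 e.2.
    by apply: connect1; rewrite /hun -surjective_pairing eH.
  have := weight_add_unit_potential pR_unit w_weight e_conn.
  have := pR_unit e eH; rewrite /= (fingraph.rootP (connect_hun_sym H) e_conn); lra.
have := d_arc e eH; have := arc_weight_lt R w e.
rewrite /comp_tail /comp_head; lra.
Qed.

Theorem mainTheorem9 (R : realFieldType) (n : nat) (G H : {set 'I_n * 'I_n})
  (hG : forall e, e \in G -> (e.1 < e.2)%N) (hHG : H \subset G) :
  is_face (@Q R n H) (@Qt R n G) <-> (path_consistent H /\ admissible G H).
Proof.
have H_fwd e : e \in H -> (e.1 < e.2)%N by move/(subsetP hHG); apply: hG.
split=> [/(face_potential_of_face hG hHG) [c c_face] | [H_consistent H_adm]].
  split; first exact: unit_potential_path_consistent c_face.1.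
  exact: face_potential_admissible c_face.
have [c c_face] := admissible_face_potential R H_fwd H_consistent H_adm.
exact: face_of_face_potential hHG c_face.
Qed.
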